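(* Suppose $(X,y)$ is orthogonal separable. Let $(W_1,w_2,\lambda)$ be a KKT point (B-subdifferential sense) of the non-convex max-margin problem, and suppose it contains two neurons $i_+,i_-$ with $w_{2,i_+}\ne0$, $w_{2,i_-}\ne0$ whose associated diagonal matrices $\hat D_{i_+},\hat D_{i_-}$ (as in the context) satisfy $$\hat D_{i_+}\ge\mathrm{diag}(\mathbb I(y=1)),\qquad\hat D_{i_-}\ge\mathrm{diag}(\mathbb I(y=-1)).$$ Then $\lambda$ is dual feasible, i.e. $\max_{u:\|u\|_2\le1}|\lambda^T(Xu)_+|\le1$.
   Context: Binary setting: $X\in\mathbb R^{N\times d}$ rows $x_n$, $y\in\{\pm1\}^N$, $Y=\mathrm{diag}(y)$. $(X,y)$ is orthogonal separable if $x_n^Tx_{n'}>0$ whenever $y_n=y_{n'}$ and $x_n^Tx_{n'}\le0$ whenever $y_n\ne y_{n'}$. Non-convex max-margin problem: $\min\frac12(\|W_1\|_F^2+\|w_2\|_2^2)$ s.t. $Y(XW_1)_+w_2\ge\mathbf 1$. KKT point (B-subdifferential): $Y\lambda\ge0$, primal feasibility, $\lambda_n(y_n(x_n^TW_1)_+w_2-1)=0$, $w_2=(XW_1)_+^T\lambda$, and for each $i$, $w_{1,i}=w_{2,i}X^T\hat D_i\lambda$ where $\hat D_i$ is diagonal with $(\hat D_i)_{nn}=1$ if $x_n^Tw_{1,i}>0$, $0$ if $x_n^Tw_{1,i}<0$, $\in\{0,1\}$ if $x_n^Tw_{1,i}=0$. Matrix inequalities between diagonal matrices are entrywise; $\mathbb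 I(y=1)$ is the $0/1$ indicator vector. *)

From mathcomp Require Import all_boot all_order all_algebra.
Set Implicit Arguments. Unset Strict Implicit. Unset Printing Implicit Defensive.
Import Order.TTheory GRing.Theory Num.Theory.
Local Open Scope ring_scope.

(* Data: X : 'M_(N,d) with rows x_n, labels y : 'I_N -> R (values +-1),
   first layer W1 : 'M_(d,m) with columns w_{1,i}, second layer w2 : 'I_m -> R,
   dual variable lam : 'I_N -> R. *)

Definition relu {R : realDomainType} (t : R) : R := Num.max t 0.

Definition xdot {R : nzRingType} {N d : nat} (X : 'M[R]_(N, d)) (n : 'I_N)
  (v : 'I_d -> R) : R := \sum_(k < d) X n k * v k.

Definition wcol {R : nzRingType} {d m : nat} (W1 : 'M[R]_(d, m)) (i : 'I_m)
  : 'I_d -> R := fun k => W1 k i.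

Definition is_label {R : nzRingType} {N : nat} (y : 'I_N -> R) : Prop :=
  forall n, y n = 1 \/ y n = -1.

Definition orthogonal_separable {R : realDomainType} {N d : nat}
  (X : 'M[R]_(N, d)) (y : 'I_N -> R) : Prop :=
  forall n n' : 'I_N,
    (y n = y n' -> 0 < \sum_(k < d) X n k * X n' k) /\
    (y n <> y n' -> \sum_(k < d) X n k * X n' k <= 0).

Definition netout {R : realDomainType} {N d m : nat} (X : 'M[R]_(N, d))
  (W1 : 'M[R]_(d, m)) (w2 : 'I_m -> R) (n : 'I_N) : R :=
  \sum_(i < m) relu (xdot X n (wcol W1 i)) * w2 i.

(* Diagonal matrix \hat D_i encoded by its diagonal D i : 'I_N -> bool
   ((\hat D_i)_{nn} = 1 iff D i n = true); consistency with the sign pattern. *)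
Definition Dhat_consistent {R : realDomainType} {N d m : nat}
  (X : 'M[R]_(N, d)) (W1 : 'M[R]_(d, m)) (D : 'I_m -> 'I_N -> bool) : Prop :=
  forall i n,
    (0 < xdot X n (wcol W1 i) -> D i n = true) /\
    (xdot X n (wcol W1 i) < 0 -> D i n = false).

(* KKT point in the B-subdifferential sense, with the matrices \hat D_i made
   explicit. *)
Definition KKT_B {R : realDomainType} {N d m : nat} (X : 'M[R]_(N, d))
  (y : 'I_N -> R) (W1 : 'M[R]_(d, m)) (w2 : 'I_m -> R) (lam : 'I_N -> R)
  (D : 'I_m -> 'I_N -> bool) : Prop :=
  (forall n, 0 <= y n * lam n) /\
  (forall n, 1 <= y n * netout X W1 w2 n) /\
  (forall n, lam n * (y n * netout X W1 w2 n - 1) = 0) /\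
  (forall i, w2 i = \sum_(n < N) relu (xdot X n (wcol W1 i)) * lam n) /\
  Dhat_consistent X W1 D /\
  (forall i k, W1 k i = w2 i * \sum_(n < N) X n k * ((D i n)%:R * lam n)).

Definition dual_feasible {R : rcfType} {N d : nat} (X : 'M[R]_(N, d))
  (lam : 'I_N -> R) : Prop :=
  forall u : 'I_d -> R, Num.sqrt (\sum_(k < d) u k ^+ 2) <= 1 ->
    `| \sum_(n < N) lam n * relu (xdot X n u) | <= 1.

(* Write G = X X^T and alpha for lam restricted to the class y = 1.  The
   neuron i+ forces alpha^T G alpha <= 1: if w_{2,i+} > 0 the identity
   w_{2,i+} = lam^T (X w_{1,i+})_+ gives alpha^T G D lam = 1, and if
   w_{2,i+} < 0 the sign pattern of D_{i+} forces (G D lam)_n = 0 on the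
   class; in both cases orthogonal separability makes the cross term
   alpha^T G (D lam - alpha) nonnegative.  For a unit vector u,
   lam^T (X u)_+ <= gamma^T X u, where gamma <= alpha is lam restricted to the
   positive samples with x_n^T u > 0; as G is positive within a class,
   gamma^T G gamma <= alpha^T G alpha <= 1, and Cauchy-Schwarz bounds
   lam^T (X u)_+ by 1.  The neuron i- gives the same bound for -lam through
   the symmetry y -> -y. *)

From mathcomp Require Import all_boot all_order all_algebra.
From mathcomp Require Import ring lra.
Import Order.TTheory GRing.Theory Num.Theory.
Set Implicit Arguments. Unset Strict Implicit.
Local Open Scope ring_scope.

Section GramForm.
Variables (R : realFieldType) (N d : nat) (X : 'M[R]_(N, d)).

Definition gram (n n' : 'I_N) : R := \sum_(k < d) X n k * X n' k.

Definition rowcomb (c : 'I_N -> R) (k : 'I_d) : R := \sum_(n < N) c n * X n k.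

Definition gram_form (a b : 'I_N -> R) : R := \sum_(k < d) rowcomb a k * rowcomb b k.

Lemma sum_xdot (c : 'I_N -> R) (u : 'I_d -> R) :
  \sum_(n < N) c n * xdot X n u = \sum_(k < d) rowcomb c k * u k.
Proof.
rewrite /xdot /rowcomb; under [RHS]eq_bigr do rewrite big_distrl.
rewrite [RHS]exchange_big; apply: eq_bigr => n _; rewrite big_distrr.
by apply: eq_bigr => k _ /=; rewrite mulrA.
Qed.

Lemma xdot_rowcomb (n : 'I_N) (c : 'I_N -> R) :
  xdot X n (rowcomb c) = \sum_(n' < N) c n' * gram n n'.
Proof.
rewrite /xdot /rowcomb; under eq_bigr do rewrite big_distrr.
rewrite exchange_big; apply: eq_bigr => n' _; rewrite /gram big_distrr.
by apply: eq_bigr => k _ /=; ring.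
Qed.

Lemma gram_formE (a b : 'I_N -> R) :
  gram_form a b = \sum_(n < N) \sum_(n' < N) a n * b n' * gram n n'.
Proof.
rewrite /gram_form -sum_xdot; apply: eq_bigr => n _.
by rewrite xdot_rowcomb big_distrr; apply: eq_bigr => n' _ /=; rewrite mulrA.
Qed.

Lemma gram_form_ge0 (a b : 'I_N -> R) :
  (forall n n', 0 <= a n * b n' * gram n n') -> 0 <= gram_form a b.
Proof. by move=> ab_ge0; rewrite gram_formE; do 2!apply: sumr_ge0 => ? _. Qed.

Lemma gram_formDr (a b b1 b2 : 'I_N -> R) : (forall n, b n = b1 n + b2 n) ->
  gram_form a b = gram_form a b1 + gram_form a b2.
Proof.
move=> bD; rewrite /gram_form -big_split; apply: eq_bigr => k _ /=.
rewrite /rowcomb -mulrDr -big_split; congr (_ * _); apply: eq_bigr => n _ /=.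
by rewrite bD mulrDl.
Qed.

Lemma gram_form_le (a b : 'I_N -> R) :
  (forall n, 0 <= a n <= b n) ->
  (forall n n', b n != 0 -> b n' != 0 -> 0 <= gram n n') ->
  gram_form a a <= gram_form b b.
Proof.
move=> ab gram_ge0; rewrite !gram_formE; apply: ler_sum => n _; apply: ler_sum => n' _.
have /andP[a_ge0 a_le] := ab n; have /andP[a'_ge0 a'_le] := ab n'.
have [bn0|bn_neq0] := eqVneq (b n) 0.
  have -> : a n = 0 by apply/le_anti; rewrite a_ge0 -bn0 a_le.
  by rewrite bn0 !mul0r.
have [bn'0|bn'_neq0] := eqVneq (b n') 0.
  have -> : a n' = 0 by apply/le_anti; rewrite a'_ge0 -bn'0 a'_le.
  by rewrite bn'0 !mulr0 !mul0r.
by rewrite ler_wpM2r ?gram_ge0 // ler_pM.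
Qed.

End GramForm.

Lemma sum_mul_le1 (R : realFieldType) (d : nat) (u v : 'I_d -> R) :
  \sum_(k < d) u k ^+ 2 <= 1 -> \sum_(k < d) v k ^+ 2 <= 1 ->
  \sum_(k < d) v k * u k <= 1.
Proof.
move=> u_le1 v_le1.
have : 2 * \sum_(k < d) v k * u k <= \sum_(k < d) v k ^+ 2 + \sum_(k < d) u k ^+ 2.
  rewrite mulr_sumr -big_split; apply: ler_sum => k _ /=.
  by have := sqr_ge0 (v k - u k); rewrite !expr2; nra.
lra.
Qed.

Definition restrict {R : nzRingType} {N : nat} (P : pred 'I_N) (c : 'I_N -> R)
  (n : 'I_N) : R := if P n then c n else 0.

Section Separable.
Variables (R : realFieldType) (N d : nat) (X : 'M[R]_(N, d)) (y : 'I_N -> R).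
Hypotheses (y_label : is_label y) (X_sep : orthogonal_separable X y).

Lemma label_neq_opp (n n' : 'I_N) : y n <> y n' -> y n = - y n'.
Proof. by case: (y_label n) (y_label n') => -> [] -> //; rewrite opprK. Qed.

Lemma label_mul_xdot_rowcomb_ge0 (c : 'I_N -> R) (n : 'I_N) :
  (forall n, 0 <= y n * c n) -> 0 <= y n * xdot X n (rowcomb X c).
Proof.
move=> yc_ge0; rewrite xdot_rowcomb mulr_sumr; apply: sumr_ge0 => n' _.
have [yy|/eqP yny] := eqVneq (y n) (y n').
  by rewrite mulrA yy mulr_ge0 // ltW //; case: (X_sep n n') => /(_ yy).
have gram_le0 : gram X n n' <= 0 by case: (X_sep n n') => _; apply.
by rewrite mulrA (label_neq_opp yny) !mulNr -mulrN mulr_ge0 // oppr_ge0.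
Qed.

Variable lam : 'I_N -> R.
Hypothesis lam_sign : forall n, 0 <= y n * lam n.

Lemma lam_le0 (n : 'I_N) : y n != 1 -> lam n <= 0.
Proof.
case: (y_label n) => [->|yn _]; first by rewrite eqxx.
by have := lam_sign n; rewrite yn mulN1r oppr_ge0.
Qed.

Lemma lam_ge0 (n : 'I_N) : y n = 1 -> 0 <= lam n.
Proof. by move=> yn; have := lam_sign n; rewrite yn mul1r. Qed.

Let pos_lam : 'I_N -> R := restrict (fun n => y n == 1) lam.

Lemma relu_sum_le (u : 'I_d -> R) :
  \sum_(n < N) lam n * relu (xdot X n u) <=
  \sum_(n < N) restrict (fun n => (y n == 1) && (0 < xdot X n u)) lam n * xdot X n u.
Proof.
apply: ler_sum => n _; rewrite /restrict.
have [yn|yn] /= := eqVneq (y n) 1.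
  have [xu_gt0|xu_le0] := ltP 0 (xdot X n u); first by rewrite /relu max_l ?(ltW xu_gt0).
  by rewrite /= /relu max_r // mulr0 mul0r.
by rewrite mul0r mulr_le0_ge0 ?lam_le0 // /relu le_max lexx orbT.
Qed.

Lemma gram_form_restrict_le (P : pred 'I_N) : (forall n, P n -> y n == 1) ->
  gram_form X (restrict P lam) (restrict P lam) <= gram_form X pos_lam pos_lam.
Proof.
move=> Ppos; apply: gram_form_le => [n|n n'].
  rewrite /pos_lam /restrict; case: ifP => [/Ppos yn|_]; rewrite ?yn /=.
    by rewrite lexx lam_ge0 //; exact/eqP.
  by case: eqP => [/lam_ge0|]; rewrite lexx ?andbT.
rewrite /pos_lam /restrict.
have [yn|_] := eqVneq (y n) 1; last by rewrite eqxx.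
have [yn'|_] := eqVneq (y n') 1; last by rewrite eqxx.
by rewrite ltW //; case: (X_sep n n') => + _; apply; rewrite yn yn'.
Qed.

Section Neuron.
Variables (c : R) (w : 'I_d -> R) (E : 'I_N -> bool).
Hypotheses (c_neq0 : c != 0)
  (c_eq : c = \sum_(n < N) relu (xdot X n w) * lam n)
  (E_sign : forall n, xdot X n w < 0 -> E n = false)
  (w_eq : forall k, w k = c * \sum_(n < N) X n k * ((E n)%:R * lam n))
  (E_pos : forall n, y n = 1 -> E n).

Let e (n : 'I_N) : R := (E n)%:R * lam n.
Let proj (n : 'I_N) : R := xdot X n (rowcomb X e).

Lemma xdot_neuron (n : 'I_N) : xdot X n w = c * proj n.
Proof.
rewrite /proj /xdot mulr_sumr; apply: eq_bigr => k _.
rewrite w_eq /rowcomb mulrCA; congr (_ * (_ * _)).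
by apply: eq_bigr => n' _; rewrite mulrC.
Qed.

Lemma label_mul_proj_ge0 (n : 'I_N) : 0 <= y n * proj n.
Proof.
apply: label_mul_xdot_rowcomb_ge0 => n'.
by rewrite /e mulrCA mulr_ge0 ?ler0n.
Qed.

Lemma pos_class_mul_proj_ge0 (n : 'I_N) : y n = 1 -> 0 <= c * proj n.
Proof.
move=> yn; rewrite -xdot_neuron leNgt; apply/negP => /E_sign.
by rewrite E_pos.
Qed.

Lemma sum_pos_lam_proj_le1 : \sum_(n < N) pos_lam n * proj n <= 1.
Proof.
have [c_lt0|c_gt0|c0] := ltgtP c 0; last by move: c_neq0; rewrite c0 eqxx.
- rewrite big1 ?ler01 // => n _; rewrite /pos_lam /restrict.
  case: eqP => [yn|_]; last by rewrite mul0r.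
  have proj_ge0 : 0 <= proj n by have := label_mul_proj_ge0 n; rewrite yn mul1r.
  have proj_le0 : proj n <= 0 by rewrite -(nmulr_rge0 _ c_lt0) pos_class_mul_proj_ge0.
  by rewrite (@le_anti _ _ (proj n) 0) ?proj_ge0 ?proj_le0 ?mulr0.
- suff : c * \sum_(n < N) pos_lam n * proj n = c * 1.
    by move/(mulfI c_neq0) ->.
  rewrite mulr1 {2}c_eq mulr_sumr; apply: eq_bigr => n _.
  rewrite xdot_neuron /pos_lam /restrict; case: (y_label n) => yn.
    by rewrite yn eqxx /relu max_l ?pos_class_mul_proj_ge0 //; ring.
  have proj_le0 : proj n <= 0 by have := label_mul_proj_ge0 n; rewrite yn mulN1r oppr_ge0.
  rewrite yn eqNr oner_eq0 /relu max_r ?mulr_ge0_le0 ?(ltW c_gt0) //.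
  by rewrite !mul0r mulr0.
Qed.

Lemma gram_form_pos_lam_le1 : gram_form X pos_lam pos_lam <= 1.
Proof.
pose neg_e := restrict (fun n => y n != 1) e.
have eD n : e n = pos_lam n + neg_e n.
  rewrite /pos_lam /neg_e /restrict /=.
  have [yn|_] := eqVneq (y n) 1; last by rewrite add0r.
  by rewrite addr0 /e E_pos // mul1r.
have neg_e_ge0 : 0 <= gram_form X pos_lam neg_e.
  apply: gram_form_ge0 => n n'; rewrite /pos_lam /neg_e /restrict /=.
  have [yn|_] := eqVneq (y n) 1; last by rewrite !mul0r.
  have [yn'|yn'] := eqVneq (y n') 1; first by rewrite mulr0 mul0r.
  have gram_le0 : gram X n n' <= 0.
    by case: (X_sep n n') => _; apply; rewrite yn => /esym/eqP; rewrite (negbTE yn').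
  apply: mulr_le0 => //; rewrite /= mulr_ge0_le0 ?lam_ge0 //.
  by rewrite /e mulr_ge0_le0 ?ler0n ?lam_le0.
have := sum_pos_lam_proj_le1; rewrite /proj sum_xdot -/(gram_form X pos_lam e).
rewrite (gram_formDr X pos_lam eD).
lra.
Qed.

Lemma neuron_relu_sum_le1 (u : 'I_d -> R) : \sum_(k < d) u k ^+ 2 <= 1 ->
  \sum_(n < N) lam n * relu (xdot X n u) <= 1.
Proof.
move=> u_le1; apply: le_trans (relu_sum_le u) _; rewrite sum_xdot.
apply: sum_mul_le1 => //; under eq_bigr do rewrite expr2.
apply: le_trans gram_form_pos_lam_le1; apply: gram_form_restrict_le => n.
by case/andP.
Qed.

End Neuron.

End Separable.

Lemma is_label_opp (R : nzRingType) (N : nat) (y : 'I_N -> R) :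
  is_label y -> is_label (fun n => - y n).
Proof. by move=> y_label n; case: (y_label n) => ->; rewrite ?opprK; [right|left]. Qed.

Lemma orthogonal_separable_opp (R : realDomainType) (N d : nat)
  (X : 'M[R]_(N, d)) (y : 'I_N -> R) :
  orthogonal_separable X y -> orthogonal_separable X (fun n => - y n).
Proof.
move=> X_sep n n'; case: (X_sep n n') => same diff; split => [/oppr_inj|yN].
  exact: same.
by apply: diff => yy; apply: yN; rewrite yy.
Qed.

Theorem proposition4 (R : rcfType) (N d m : nat) (X : 'M[R]_(N, d))
  (y : 'I_N -> R) (W1 : 'M[R]_(d, m)) (w2 : 'I_m -> R) (lam : 'I_N -> R)
  (D : 'I_m -> 'I_N -> bool) (ip im : 'I_m) :
  is_label y ->
  orthogonal_separable X y ->
  KKT_B X y W1 w2 lam D ->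
  w2 ip != 0 -> w2 im != 0 ->
  (forall n, y n = 1 -> D ip n = true) ->
  (forall n, y n = -1 -> D im n = true) ->
  dual_feasible X lam.
Proof.
move=> y_label X_sep [lam_sign [_ [_ [w2_eq [D_sign W1_eq]]]]] w2p_neq0 w2m_neq0 Dp Dm u.
rewrite -{1}sqrtr1 ler_sqrt ?ler01 // => u_le1.
have pos_le1 := neuron_relu_sum_le1 y_label X_sep lam_sign w2p_neq0 (w2_eq ip)
  (fun n => proj2 (D_sign ip n)) (W1_eq ip) Dp u_le1.
have neg_le1 : \sum_(n < N) - lam n * relu (xdot X n u) <= 1.
  apply: (neuron_relu_sum_le1 (is_label_opp y_label) (orthogonal_separable_opp X_sep)
    _ (c := - w2 im) (E := D im) (w := wcol W1 im)) => //.
  - by move=> n; rewrite mulrNN.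
  - by rewrite oppr_eq0.
  - by rewrite w2_eq -sumrN; apply: eq_bigr => n _; rewrite mulrN.
  - exact: (fun n => proj2 (D_sign im n)).
  - move=> k; rewrite /wcol W1_eq mulNr -mulrN -sumrN; congr (_ * _).
    by apply: eq_bigr => n _; rewrite !mulrN opprK.
  - by move=> n yn; apply: Dm; rewrite -[y n]opprK yn.
rewrite ler_norml pos_le1 andbT.
by move: neg_le1; under eq_bigr do rewrite mulNr; rewrite sumrN lerNl.
Qed.
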